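(* Let $A\in\mathbb{C}^{n\times n}$ be stable, $B\in\mathbb{C}^{n\times r}$, and $(A,B)$ controllable. Let $X$ solve $AX+XA^*=-BB^*$ with singular values $s_1\ge\cdots\ge s_n>0$. Then the numerical abscissa of $A$ satisfies $$-\frac{\|B\|^2}{2s_1}\;\le\;\omega(A)\;\le\;\frac{s_1-s_n}{s_1+s_n}\,\|A\|.$$
   Context: $\|\cdot\|$ is the vector 2-norm and induced spectral norm. $(A,B)$ controllable means $\operatorname{rank}[B\ AB\ \cdots\ A^{n-1}B]=n$; stability means all eigenvalues of $A$ lie in the open left half-plane. The numerical abscissa is $\omega(A)=\max\{\operatorname{Re} z: z\in W(A)\}$, where $W(A)=\{x^*Ax: x\in\mathbb{C}^n,\|x\|=1\}$ is the numerical range; equivalently $\omega(A)$ is the largest eigenvalue of $\tfrac12(A+A^* )$. *)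

(* Complex matrices are modelled over an arbitrary
   numClosedFieldType C (e.g. algC), with conjugation conjC, real part 'Re,
   modulus `|_| and square root sqrtC. *)
From HB Require Import structures.
From mathcomp Require Import all_boot all_order all_algebra.
Set Implicit Arguments. Unset Strict Implicit. Unset Printing Implicit Defensive.
Import Order.TTheory GRing.Theory Num.Theory.
Local Open Scope ring_scope.

Definition adjmx (C : numClosedFieldType) m n (M : 'M[C]_(m, n)) : 'M[C]_(n, m) :=
  \matrix_(i, j) (M j i)^*.

Definition vnorm (C : numClosedFieldType) n (x : 'cV[C]_n) : C :=
  sqrtC (\sum_i `|x i 0| ^+ 2).

Definition is_opnorm (C : numClosedFieldType) m n (M : 'M[C]_(m, n)) (s : C) : Prop :=
  0 <= s /\
  (forall x : 'cV[C]_n, vnorm (M *m x) <= s * vnorm x) /\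
  (forall t : C, 0 <= t -> (forall x : 'cV[C]_n, vnorm (M *m x) <= t * vnorm x) -> s <= t).

Definition is_num_abscissa (C : numClosedFieldType) n (A : 'M[C]_n) (w : C) : Prop :=
  (forall x : 'cV[C]_n, vnorm x = 1 -> 'Re ((adjmx x *m A *m x) 0 0) <= w) /\
  (exists2 x : 'cV[C]_n, vnorm x = 1 & 'Re ((adjmx x *m A *m x) 0 0) = w).

Definition stable (C : numClosedFieldType) n (A : 'M[C]_n) : Prop :=
  forall z : C, eigenvalue A z -> 'Re z < 0.

Definition controllable (C : numClosedFieldType) n r (A : 'M[C]_n) (B : 'M[C]_(n, r)) : Prop :=
  \rank (\mxrow_(k < n) (A ^+ k *m B)) = n.

Definition singular_value (C : numClosedFieldType) m n (M : 'M[C]_(m, n)) (s : C) : Prop :=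
  0 <= s /\ eigenvalue (adjmx M *m M) (s ^+ 2).

From HB Require Import structures.
From mathcomp Require Import all_boot all_order all_algebra.
From mathcomp Require Import sesquilinear spectral ring.
Import Order.TTheory GRing.Theory Num.Theory.
Local Open Scope ring_scope.
Set Implicit Arguments. Unset Strict Implicit. Unset Printing Implicit Defensive.

(* Stability makes the solution X of the Lyapunov equation hermitian and
   positive semidefinite (Lyapunov's theorem, proved here by Schur
   triangularisation followed by successive Schur-complement deflations), so
   X = P^* diag(d) P with P unitary and sn <= d_i <= s1.  Since X is hermitian,
   2 Re (x^* A X x) = - |B^* x|^2 for every x.  For the unit eigenvector x of
   X for s1 this reads Re (x^* A x) = - |B^* x|^2 / (2 s1) >= - |B|^2 / (2 s1).
   For the upper bound write X x = c x + f with c = (s1 + sn) / 2, so that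
   |f| <= (s1 - sn) / 2 |x|; then c Re (x^* A x) <= - Re (x^* A f) <= |A| |f|. *)

Section Adjoint.
Variable C : numClosedFieldType.

Lemma adjmxE m n (A : 'M[C]_(m, n)) : adjmx A = (A ^t*)%sesqui.
Proof. by apply/matrixP=> i j; rewrite !mxE. Qed.

Lemma adjmxM m n p (A : 'M[C]_(m, n)) (B : 'M[C]_(n, p)) :
  adjmx (A *m B) = adjmx B *m adjmx A.
Proof. by rewrite !adjmxE trmx_mul map_mxM. Qed.

Lemma adjmxK m n (A : 'M[C]_(m, n)) : adjmx (adjmx A) = A.
Proof. by apply/matrixP=> i j; rewrite !mxE conjCK. Qed.

Lemma adjmxD m n (A B : 'M[C]_(m, n)) : adjmx (A + B) = adjmx A + adjmx B.
Proof. by apply/matrixP=> i j; rewrite !mxE rmorphD. Qed.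

Lemma adjmxN m n (A : 'M[C]_(m, n)) : adjmx (- A) = - adjmx A.
Proof. by apply/matrixP=> i j; rewrite !mxE rmorphN. Qed.

Lemma adjmxB m n (A B : 'M[C]_(m, n)) : adjmx (A - B) = adjmx A - adjmx B.
Proof. by rewrite adjmxD adjmxN. Qed.

Lemma adjmxZ m n a (A : 'M[C]_(m, n)) : adjmx (a *: A) = a^* *: adjmx A.
Proof. by apply/matrixP=> i j; rewrite !mxE rmorphM. Qed.

Lemma adjmx_scalar n a : adjmx (a%:M : 'M[C]_n) = a^*%:M.
Proof. by apply/matrixP=> i j; rewrite !mxE rmorphMn eq_sym. Qed.

End Adjoint.

Section InnerProduct.
Variables (C : numClosedFieldType) (n : nat).
Implicit Types (u v w : 'cV[C]_n).

Definition cdot u v : C := (adjmx u *m v) 0 0.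

Lemma cdotE u v : cdot u v = \sum_i (u i 0)^* * v i 0.
Proof. by rewrite /cdot mxE; apply: eq_bigr => i _; rewrite mxE. Qed.

Lemma cdotDl u v w : cdot (u + v) w = cdot u w + cdot v w.
Proof. by rewrite /cdot adjmxD mulmxDl mxE. Qed.

Lemma cdotDr u v w : cdot w (u + v) = cdot w u + cdot w v.
Proof. by rewrite /cdot mulmxDr mxE. Qed.

Lemma cdotNl u w : cdot (- u) w = - cdot u w.
Proof. by rewrite /cdot adjmxN mulNmx mxE. Qed.

Lemma cdotNr u w : cdot w (- u) = - cdot w u.
Proof. by rewrite /cdot mulmxN mxE. Qed.

Lemma cdotZl a u w : cdot (a *: u) w = a^* * cdot u w.
Proof. by rewrite /cdot adjmxZ -scalemxAl mxE. Qed.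

Lemma cdotZr a u w : cdot w (a *: u) = a * cdot w u.
Proof. by rewrite /cdot -scalemxAr mxE. Qed.

Lemma conj_cdot u v : (cdot u v)^* = cdot v u.
Proof.
rewrite !cdotE rmorph_sum; apply: eq_bigr => i _.
by rewrite rmorphM /= conjCK mulrC.
Qed.

Lemma cdot_ge0 u : 0 <= cdot u u.
Proof. by rewrite cdotE sumr_ge0 // => i _; rewrite mulrC mul_conjC_ge0. Qed.

Lemma cdot_eq0 u : (cdot u u == 0) = (u == 0).
Proof.
apply/idP/eqP => [|->]; last by rewrite /cdot mulmx0 mxE.
rewrite cdotE psumr_eq0 => [/allP u0|i _]; last by rewrite mulrC mul_conjC_ge0.
apply/matrixP=> i j; rewrite ord1 mxE.
by apply/eqP; rewrite -mul_conjC_eq0 mulrC; apply: u0; rewrite mem_index_enum.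
Qed.

Lemma vnormE u : vnorm u = sqrtC (cdot u u).
Proof. by rewrite /vnorm cdotE; congr sqrtC; apply: eq_bigr => i _; rewrite normCK mulrC. Qed.

Lemma vnorm_sqr u : vnorm u ^+ 2 = cdot u u.
Proof. by rewrite vnormE sqrtCK. Qed.

Lemma vnorm_ge0 u : 0 <= vnorm u.
Proof. by rewrite vnormE sqrtC_ge0 cdot_ge0. Qed.

Lemma vnorm_eq1 u : (vnorm u = 1) <-> (cdot u u = 1).
Proof.
rewrite vnormE; split => [/(congr1 (fun x => x ^+ 2))|->].
  by rewrite sqrtCK expr1n.
by rewrite sqrtC1.
Qed.

Lemma cdot_cauchy_schwarz u v : `|cdot u v| <= vnorm u * vnorm v.
Proof.
have dotE u' v' : cdot u' v' = dotmx v'^T u'^T.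
  by rewrite dotmxE cdotE mxE; apply: eq_bigr => i _; rewrite !mxE mulrC.
rewrite !vnormE !dotE mulrC.
exact: (CauchySchwarz_sqrt (@dotmx C n) v^T u^T).1.
Qed.

End InnerProduct.

Lemma cdot_mulmxl (C : numClosedFieldType) m n (M : 'M[C]_(m, n)) u v :
  cdot (M *m u) v = cdot u (adjmx M *m v).
Proof. by rewrite /cdot adjmxM mulmxA. Qed.

Lemma cdot_unitary (C : numClosedFieldType) m n (U : 'M[C]_(m, n)) (y : 'cV[C]_n) :
  adjmx U *m U = 1%:M -> cdot (U *m y) (U *m y) = cdot y y.
Proof. by move=> UU; rewrite cdot_mulmxl mulmxA UU mul1mx. Qed.

Lemma vnorm_unitary (C : numClosedFieldType) m n (U : 'M[C]_(m, n)) (y : 'cV[C]_n) :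
  adjmx U *m U = 1%:M -> vnorm (U *m y) = vnorm y.
Proof. by move=> UU; rewrite !vnormE cdot_unitary. Qed.

Section Hermitian.
Variables (C : numClosedFieldType) (n : nat).
Implicit Types (M Q W : 'M[C]_n) (u v : 'cV[C]_n).

Definition herm M := adjmx M = M.
Definition psd M := forall x, 0 <= cdot x (M *m x).

Lemma cdot_herm M u v : herm M -> cdot u (M *m v) = cdot (M *m u) v.
Proof. by move=> hM; rewrite cdot_mulmxl hM. Qed.

Lemma conj_cdot_herm M u : herm M -> (cdot u (M *m u))^* = cdot u (M *m u).
Proof. by move=> hM; rewrite conj_cdot cdot_herm. Qed.

Lemma herm_congr Q M : herm Q -> herm (adjmx M *m Q *m M).
Proof. by move=> hQ; rewrite /herm !adjmxM adjmxK hQ mulmxA. Qed.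

Lemma psd_congr Q M : psd Q -> psd (adjmx M *m Q *m M).
Proof. by move=> pQ x; rewrite -!mulmxA -cdot_mulmxl pQ. Qed.

Lemma herm_gram r (B : 'M[C]_(n, r)) : herm (B *m adjmx B).
Proof. by rewrite /herm adjmxM adjmxK. Qed.

Lemma psd_gram r (B : 'M[C]_(n, r)) : psd (B *m adjmx B).
Proof. by move=> x; rewrite -mulmxA -{1}(adjmxK B) -cdot_mulmxl cdot_ge0. Qed.

(* Otherwise the form of [M] would be negative at [u - s *: M u] for a small real [s > 0]. *)
Lemma psd_kernel M u : herm M -> psd M -> cdot u (M *m u) = 0 -> M *m u = 0.
Proof.
move=> hM pM u0; set v := M *m u; apply/eqP; rewrite -cdot_eq0.
set a := cdot v v; set m := cdot v (M *m v).
have [//|a_neq0] := eqVneq a 0.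
have a_gt0 : 0 < a by rewrite lt_def a_neq0 cdot_ge0.
have m1_gt0 : 0 < m + 1 by rewrite ltr_wpDl // pM.
have s_real : (a / (m + 1))^* = a / (m + 1).
  by apply/CrealP; rewrite gtr0_real // divr_gt0.
have := pM (u - (a / (m + 1)) *: v).
rewrite mulmxBr -scalemxAr cdotDl cdotNl !cdotDr !cdotNr !cdotZl !cdotZr.
rewrite u0 cdot_herm // -/v -/a -/m s_real.
have -> : 0 - a / (m + 1) * a - (a / (m + 1) * a - a / (m + 1) * (a / (m + 1) * m))
    = - (a * a * (m + 2%:R) / (m + 1) / (m + 1)).
  by field; rewrite gt_eqF.
by rewrite oppr_ge0 => /le_gtF; rewrite !divr_gt0 ?mulr_gt0 // ltr_wpDl // pM.
Qed.

Lemma psd_antisym W : herm W -> psd W -> psd (- W) -> W = 0.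
Proof.
move=> hW pW pNW; apply/matrixP=> i j.
have Wej : W *m (delta_mx j 0 : 'cV[C]_n) = 0.
  apply: psd_kernel => //; apply/eqP; rewrite eq_le pW andbT.
  by have := pNW (delta_mx j 0 : 'cV[C]_n); rewrite mulNmx cdotNr oppr_ge0.
by have := congr1 (fun x : 'cV[C]_n => x i 0) Wej; rewrite /= -colE !mxE.
Qed.

Lemma herm_entry (Y : 'M[C]_n) i j :
  herm Y -> Y i j = (Y j i)^*.
Proof. by move=> hY; rewrite -{1}hY mxE. Qed.

Lemma psd_add_rank1 (Z : 'M[C]_n) (y : 'cV[C]_n) c :
  psd Z -> 0 <= c -> psd (Z + c *: (y *m adjmx y)).
Proof.
move=> pZ c0 x; rewrite mulmxDl cdotDr -scalemxAl cdotZr -mulmxA.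
rewrite [adjmx y *m x]mx11_scalar mul_mx_scalar cdotZr -/(cdot y x) -(conj_cdot x y).
by rewrite addr_ge0 ?pZ // mulr_ge0 // mulrC mul_conjC_ge0.
Qed.

Lemma herm_deflate (Y : 'M[C]_n) (u : 'cV[C]_n) :
  herm Y -> herm (Y - (cdot u (Y *m u))^-1 *: (Y *m u *m adjmx (Y *m u))).
Proof.
move=> hY; rewrite /herm adjmxB adjmxZ fmorphV /= conj_cdot_herm //.
by rewrite adjmxM adjmxK hY.
Qed.

End Hermitian.

Section Eigenvalues.
Variables (C : numClosedFieldType) (n : nat).
Implicit Types (M P T : 'M[C]_n).

Lemma eigenvalue_unit M a : eigenvalue M a = (M - a%:M \notin unitmx).
Proof. by rewrite /eigenvalue /eigenspace kermx_eq0 row_free_unit. Qed.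

Lemma eigenvalue_trig T a : is_trig_mx T -> eigenvalue T a = [exists i, T i i == a].
Proof.
move=> T_trig; rewrite eigenvalue_unit unitmxE det_trig ?unitfE ?negbK; last first.
  apply/is_trig_mxP => i j ij; rewrite !mxE (is_trig_mxP T_trig) // sub0r.
  by rewrite (_ : (i == j) = false) ?oppr0 //; apply: contraTF ij => /eqP->; rewrite ltnn.
have diagE i : ((T - a%:M) i i == 0) = (T i i == a).
  by rewrite !mxE eqxx mulr1n subr_eq0.
apply/prodf_eq0/existsP => [[i _ Ti]|[i Ti]]; exists i; by rewrite ?diagE in Ti *.
Qed.

Lemma eigenvalue_unitary_conj P M a : adjmx P *m P = 1%:M -> P *m adjmx P = 1%:M ->
  eigenvalue (P *m M *m adjmx P) a = eigenvalue M a.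
Proof.
move=> PP' PP; have [P_unit _] := mulmx1_unit PP; have [P'_unit _] := mulmx1_unit PP'.
rewrite !eigenvalue_unit; have -> : P *m M *m adjmx P - a%:M = P *m (M - a%:M) *m adjmx P.
  by rewrite mulmxBr mulmxBl mul_mx_scalar -scalemxAl PP scalemx1.
by rewrite !unitmx_mul P_unit P'_unit !andbT.
Qed.

End Eigenvalues.

Section LyapunovDeflation.
Variables (C : numClosedFieldType) (n : nat) (T Y Q : 'M[C]_n) (u : 'cV[C]_n) (t : C).
Hypotheses (hY : herm Y) (lyapY : T *m Y + Y *m adjmx T = - Q).
Hypothesis row_eigen : adjmx u *m T *m Y = t *: (adjmx u *m Y).

Local Notation y := (Y *m u).
Local Notation e := (cdot u (Y *m u)).

Lemma lyap_mul_col : T *m y = - (Q *m u) - t^* *: y.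
Proof.
have col_eigen : Y *m adjmx T *m u = t^* *: y.
  have := congr1 (@adjmx _ _ _) row_eigen.
  by rewrite !adjmxM adjmxZ adjmxM !adjmxK hY mulmxA.
have := congr1 (mulmx^~ u) lyapY; rewrite /= mulmxDl col_eigen mulNmx -mulmxA.
by move <-; rewrite addrK.
Qed.

Lemma lyap_form_col : cdot u (Q *m u) = - (t + t^*) * e.
Proof.
have : cdot u (T *m y) = t * e by rewrite /cdot !mulmxA row_eigen -scalemxAl mxE.
rewrite lyap_mul_col cdotDr !cdotNr cdotZr => te.
by rewrite mulNr mulrDl -te; ring.
Qed.

(* The Schur-complement step: removing the rank-one part [y y^* / e] of [Y]
   keeps a Lyapunov equation, with right-hand side congruent to [Q]. *)
Lemma lyap_deflate : herm Q -> e != 0 ->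
  let Z := Y - e^-1 *: (y *m adjmx y) in
  let M := 1%:M - e^-1 *: (u *m adjmx y) in
  T *m Z + Z *m adjmx T = - (adjmx M *m Q *m M).
Proof.
move=> hQ e_neq0 Z M; rewrite {}/Z {}/M.
have e_real : (e^-1)^* = e^-1 by rewrite fmorphV /= conj_cdot_herm.
have Ty := lyap_mul_col; have Ek := lyap_form_col.
set q := Q *m u in Ty Ek *; set k := cdot u q in Ek.
have yT : adjmx y *m adjmx T = - adjmx q - t *: adjmx y.
  by rewrite -adjmxM Ty adjmxB adjmxN adjmxZ conjCK.
have uQ : adjmx u *m Q = adjmx q by rewrite /q adjmxM hQ.
have qu : adjmx q *m u = k%:M by rewrite -uQ [LHS]mx11_scalar /k /cdot /q mulmxA.
set a := q *m adjmx y; set b := y *m adjmx q; set c := y *m adjmx y.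
have -> : T *m (Y - e^-1 *: c) + (Y - e^-1 *: c) *m adjmx T
    = - Q + e^-1 *: (a + b) + (e^-1 * (t + t^*)) *: c.
  rewrite mulmxBr mulmxBl -!scalemxAr -!scalemxAl /c.
  rewrite [T *m (y *m _)]mulmxA Ty -[(y *m adjmx y) *m adjmx T]mulmxA yT.
  rewrite addrACA lyapY mulmxBl mulmxBr mulNmx mulmxN -!scalemxAl -!scalemxAr -/a -/b -/c.
  by apply/matrixP=> i j; rewrite !mxE; ring.
have -> : adjmx (1%:M - e^-1 *: (u *m adjmx y)) *m Q *m (1%:M - e^-1 *: (u *m adjmx y))
    = Q - e^-1 *: (a + b) + (e^-1 * e^-1 * k) *: c.
  rewrite adjmxB adjmx_scalar conjC1 adjmxZ e_real adjmxM adjmxK.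
  rewrite mulmxBl mul1mx mulmxBr mulmx1 -!scalemxAl -!scalemxAr.
  rewrite mulmxBl -scalemxAl -[y *m adjmx u *m Q]mulmxA uQ [Q *m (u *m _)]mulmxA -/q.
  rewrite [_ *m (u *m adjmx y)]mulmxA -[y *m adjmx q *m u]mulmxA qu.
  rewrite mul_mx_scalar -scalemxAl -/a -/b -/c.
  by apply/matrixP=> i j; rewrite !mxE; ring.
by rewrite Ek; apply/matrixP=> i j; rewrite !mxE; field.
Qed.

End LyapunovDeflation.

Lemma deflate_vanishing (C : numClosedFieldType) n (Y : 'M[C]_n) (k : 'I_n) :
  herm Y -> (forall i j : 'I_n, (j < k)%N -> Y i j = 0) ->
  let u := delta_mx k 0 : 'cV[C]_n in let e := cdot u (Y *m u) in e != 0 ->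
  forall i j : 'I_n, (j < k.+1)%N -> (Y - e^-1 *: (Y *m u *m adjmx (Y *m u))) i j = 0.
Proof.
move=> hY Y0 u e e_neq0 i j; rewrite ltnS leq_eqVlt => /orP[/eqP/val_inj->|jk].
  have Zu : (Y - e^-1 *: (Y *m u *m adjmx (Y *m u))) *m u = 0.
    rewrite mulmxBl -scalemxAl -[_ *m adjmx _ *m u]mulmxA.
    rewrite [adjmx _ *m u]mx11_scalar -/(cdot (Y *m u) u).
    by rewrite -conj_cdot conj_cdot_herm // mul_mx_scalar scalerA mulVf // scale1r subrr.
  by have := congr1 (fun x : 'cV[C]_n => x i 0) Zu; rewrite /= -colE !mxE.
have : (Y *m u) j 0 = 0 by rewrite -colE mxE (herm_entry j k hY) Y0 // conjC0.
move: (Y *m u) => y yj0.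
by rewrite !mxE Y0 // big_ord1 !mxE yj0 conjC0 !mulr0 subrr.
Qed.

Section TriangularLyapunov.
Variables (C : numClosedFieldType) (n : nat) (T : 'M[C]_n).
Hypotheses (T_trig : is_trig_mx T) (T_stable : forall i, 'Re (T i i) < 0).

Lemma trig_shift_unit a : 'Re a < 0 -> T + a%:M \in unitmx.
Proof.
move=> a_stable; have -> : T + a%:M = T - (- a)%:M by rewrite raddfN opprK.
rewrite -[_ \in unitmx]negbK -eigenvalue_unit eigenvalue_trig //.
apply/existsP => -[i /eqP Ti]; have := T_stable i.
by rewrite Ti raddfN oppr_lt0 le_gtF // ltW.
Qed.

Definition lyap_psd_vanishing k := forall Y Q : 'M[C]_n,
  herm Y -> herm Q -> psd Q -> T *m Y + Y *m adjmx T = - Q ->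
  (forall i j : 'I_n, (j < k)%N -> Y i j = 0) -> psd Y.

Lemma lyap_psd_vanishing_all : lyap_psd_vanishing n.
Proof.
move=> Y Q _ _ _ _ Y0 x.
have -> : Y = 0 by apply/matrixP=> i j; rewrite mxE Y0.
by rewrite mul0mx /cdot mulmx0 mxE.
Qed.

Lemma trig_row_eigen (Y : 'M[C]_n) (k : 'I_n) : herm Y ->
  (forall i j : 'I_n, (j < k)%N -> Y i j = 0) ->
  adjmx (delta_mx k 0 : 'cV[C]_n) *m T *m Y = T k k *: (adjmx (delta_mx k 0) *m Y).
Proof.
move=> hY Y0.
have -> : adjmx (delta_mx k 0 : 'cV[C]_n) = delta_mx 0 k.
  by apply/matrixP=> i j; rewrite !mxE rmorph_nat andbC.
rewrite -!rowE; apply/matrixP=> i l; rewrite !mxE.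
rewrite (bigD1 k) //= big1 ?addr0 ?mxE // => j /negbTE jk; rewrite !mxE.
case: (ltngtP j k) => [jk'|kj|/val_inj jk']; last by rewrite jk' eqxx in jk.
  by rewrite (herm_entry j l hY) Y0 // conjC0 mulr0.
by rewrite (is_trig_mxP T_trig) // mul0r.
Qed.

Section Column.
Variables (k : 'I_n) (Y Q : 'M[C]_n).
Hypotheses (hY : herm Y) (hQ : herm Q) (pQ : psd Q).
Hypothesis lyapY : T *m Y + Y *m adjmx T = - Q.
Hypothesis Y0 : forall i j : 'I_n, (j < k)%N -> Y i j = 0.

Local Notation u := (delta_mx k 0 : 'cV[C]_n).

Lemma lyap_col_ge0 : 0 <= cdot u (Y *m u).
Proof.
have form := lyap_form_col hY lyapY (trig_row_eigen hY Y0).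
have tau_gt0 : 0 < - (T k k + (T k k)^*).
  have -> : T k k + (T k k)^* = 'Re (T k k) *+ 2.
    by rewrite ReE -mulr_natr mulfVK // pnatr_eq0.
  by rewrite -mulNrn mulrn_wgt0 // oppr_gt0.
have tau_neq0 := lt0r_neq0 tau_gt0.
by rewrite -(mulKf tau_neq0 (cdot _ _)) -form mulr_ge0 ?invr_ge0 ?pQ ?ltW.
Qed.

Lemma lyap_col_eq0 : cdot u (Y *m u) = 0 -> Y *m u = 0.
Proof.
move=> e0; have row_eigen := trig_row_eigen hY Y0.
have Qu0 : Q *m u = 0.
  by apply: psd_kernel => //; rewrite (lyap_form_col hY lyapY row_eigen) e0 mulr0.
have : (T + (T k k)^*%:M) *m (Y *m u) = 0.
  by rewrite mulmxDl (lyap_mul_col hY lyapY row_eigen) Qu0 oppr0 sub0r mul_scalar_mx addNr.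
move/(congr1 (mulmx (invmx (T + (T k k)^*%:M)))).
by rewrite mulKmx ?mulmx0 // trig_shift_unit // Re_conj.
Qed.

End Column.

Lemma lyap_psd_vanishing_step (k : 'I_n) :
  lyap_psd_vanishing k.+1 -> lyap_psd_vanishing k.
Proof.
move=> IH Y Q hY hQ pQ lyapY Y0.
set u : 'cV[C]_n := delta_mx k 0; set e := cdot u (Y *m u).
have [e0|e_neq0] := eqVneq e 0.
  apply: (IH Y Q) => // i j; rewrite ltnS leq_eqVlt => /orP[/eqP/val_inj->|]; last exact: Y0.
  have := congr1 (fun x : 'cV[C]_n => x i 0) (lyap_col_eq0 hY hQ pQ lyapY Y0 e0).
  by rewrite /= -colE !mxE.
have lyapZ := lyap_deflate hY lyapY (trig_row_eigen hY Y0) hQ e_neq0.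
have pZ := IH _ _ (herm_deflate _ hY) (herm_congr _ hQ) (psd_congr _ pQ) lyapZ
  (deflate_vanishing hY Y0 e_neq0).
rewrite -[Y](subrK (e^-1 *: (Y *m u *m adjmx (Y *m u)))).
by apply: psd_add_rank1 pZ _; rewrite invr_ge0 (lyap_col_ge0 hY pQ lyapY Y0).
Qed.

Lemma lyap_trig_psd : lyap_psd_vanishing 0.
Proof.
suff vanishing m : (m <= n)%N -> lyap_psd_vanishing (n - m).
  by have := vanishing n (leqnn n); rewrite subnn.
elim: m => [_|m IH mn]; first by rewrite subn0; exact: lyap_psd_vanishing_all.
have kn : (n - m.+1 < n)%N by rewrite ltn_subrL (leq_ltn_trans _ mn).
have := @lyap_psd_vanishing_step (Ordinal kn); rewrite /= subnSK //; apply.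
exact: IH (ltnW mn).
Qed.

End TriangularLyapunov.

Section StableLyapunov.
Variables (C : numClosedFieldType) (n : nat) (A : 'M[C]_n).
Hypothesis A_stable : stable A.

Lemma lyap_stable_psd Y Q : herm Y -> herm Q -> psd Q ->
  A *m Y + Y *m adjmx A = - Q -> psd Y.
Proof.
move=> hY hQ pQ lyapY.
have [n0|n_gt0] := posnP n.
  by move=> x; rewrite cdotE big1 // => i; have := ltn_ord i; rewrite {2}n0.
have [P P_unitary T_trig] := Schur A n_gt0.
rewrite /similar_to conjymx // -adjmxE in T_trig.
have PP : P *m adjmx P = 1%:M by rewrite adjmxE; apply/unitarymxP.
have PP' : adjmx P *m P = 1%:M := mulmx1C PP.
set T := P *m A *m adjmx P in T_trig.
have T_stable i : 'Re (T i i) < 0.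
  apply: A_stable; rewrite -(eigenvalue_unitary_conj _ _ PP' PP) eigenvalue_trig //.
  by apply/existsP; exists i.
have conjE M : P *m M *m adjmx P = adjmx (adjmx P) *m M *m adjmx P by rewrite adjmxK.
have lyapT : T *m (P *m Y *m adjmx P) + (P *m Y *m adjmx P) *m adjmx T
    = - (P *m Q *m adjmx P).
  rewrite /T !adjmxM adjmxK !mulmxA -!(mulmxA _ (adjmx P) P) PP' !mulmx1.
  rewrite -mulmxDl -[P *m A *m Y]mulmxA -[P *m Y *m _]mulmxA -mulmxDr lyapY.
  by rewrite mulmxN mulNmx.
have pY : psd (P *m Y *m adjmx P).
  apply: (lyap_trig_psd T_trig T_stable _ _ _ lyapT) => //; rewrite conjE.
  - exact: herm_congr.
  - exact: herm_congr.
  - exact: psd_congr.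
have -> : Y = adjmx P *m (P *m Y *m adjmx P) *m P.
  by rewrite !mulmxA PP' mul1mx -mulmxA PP' mulmx1.
exact: psd_congr.
Qed.

Lemma lyap_stable_homogeneous W : herm W -> A *m W + W *m adjmx A = 0 -> W = 0.
Proof.
have h0 : herm (0 : 'M[C]_n) by apply/matrixP=> i j; rewrite !mxE conjC0.
have p0 : psd (0 : 'M[C]_n) by move=> x; rewrite mul0mx /cdot mulmx0 mxE.
move=> hW lyapW; apply: psd_antisym => //.
  by apply: (lyap_stable_psd hW h0 p0); rewrite lyapW oppr0.
apply: (lyap_stable_psd _ h0 p0); first by rewrite /herm adjmxN hW.
by rewrite mulmxN mulNmx -opprD lyapW oppr0.
Qed.

(* [X - X^*] solves the homogeneous equation; multiplying by [i] makes it hermitian. *)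
Lemma lyap_stable_herm X Q : herm Q -> A *m X + X *m adjmx A = - Q -> herm X.
Proof.
move=> hQ lyapX.
have lyapXadj : A *m adjmx X + adjmx X *m adjmx A = - Q.
  by have := congr1 (@adjmx _ _ _) lyapX; rewrite adjmxD !adjmxM adjmxN adjmxK hQ addrC.
set W := 'i *: (X - adjmx X).
have hW : herm W by rewrite /herm adjmxZ conjCi adjmxB adjmxK scaleNr -scalerN opprB.
have lyapW : A *m W + W *m adjmx A = 0.
  rewrite -scalemxAr -scalemxAl -scalerDr mulmxBr mulmxBl addrACA -opprD.
  by rewrite lyapX lyapXadj subrr scaler0.
have /eqP := lyap_stable_homogeneous hW lyapW.
by rewrite scaler_eq0 (negPf (neq0Ci C)) subr_eq0 => /eqP X_herm; rewrite /herm -X_herm.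
Qed.

End StableLyapunov.

Lemma vnorm_diag_le (C : numClosedFieldType) n (e : 'rV[C]_n) (y : 'cV[C]_n) r :
  0 <= r -> (forall i, `|e 0 i| <= r) -> vnorm (diag_mx e *m y) <= r * vnorm y.
Proof.
move=> r0 e_le; rewrite -(ler_pXn2r (_ : 0 < 2)%N) ?nnegrE ?mulr_ge0 ?vnorm_ge0 //.
rewrite exprMn !vnorm_sqr !cdotE mulr_sumr ler_sum // => i _.
rewrite mul_diag_mx !mxE rmorphM mulrACA -!normCKC ler_wpM2r ?exprn_ge0 //.
by rewrite lerXn2r ?nnegrE.
Qed.

Lemma herm_spectral (C : numClosedFieldType) n (X : 'M[C]_n) : herm X ->
  exists P : 'M[C]_n, exists d : 'rV[C]_n,
    [/\ adjmx P *m P = 1%:M, P *m adjmx P = 1%:M & X = adjmx P *m diag_mx d *m P].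
Proof.
move=> hX; have X_normal : X \is normalmx by apply/normalmxP; rewrite -adjmxE hX.
have PP : spectralmx X *m adjmx (spectralmx X) = 1%:M.
  by rewrite adjmxE; apply/unitarymxP/spectral_unitarymx.
exists (spectralmx X), (spectral_diag X); split; first exact: mulmx1C.
  exact: PP.
by rewrite adjmxE -invmx_unitary ?spectral_unitarymx //; apply/orthomx_spectralP.
Qed.

Section Spectral.
Variables (C : numClosedFieldType) (n : nat) (X P : 'M[C]_n) (d : 'rV[C]_n).
Hypotheses (PP' : adjmx P *m P = 1%:M) (PP : P *m adjmx P = 1%:M).
Hypothesis X_spectral : X = adjmx P *m diag_mx d *m P.

Local Notation v i := (adjmx P *m (delta_mx i 0 : 'cV[C]_n)).

Lemma spectral_eigvec i : X *m v i = d 0 i *: v i.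
Proof.
rewrite X_spectral -!mulmxA [P *m (adjmx P *m _)]mulmxA PP mul1mx mul_diag_mx.
rewrite scalemxAr; congr (_ *m _); apply/matrixP=> j k; rewrite !mxE.
by have [->|] := eqVneq j i; rewrite ?mulr1 ?mulr0 // andFb mulr0.
Qed.

Lemma spectral_eigvec_unit i : cdot (v i) (v i) = 1.
Proof.
rewrite cdot_unitary ?adjmxK // cdotE (bigD1 i) //= big1 => [|j /negbTE ji].
  by rewrite !mxE !eqxx conjC1 mulr1 addr0.
by rewrite !mxE ji mulr0.
Qed.

Lemma psd_spectral_ge0 i : psd X -> 0 <= d 0 i.
Proof.
by move=> /(_ (v i)); rewrite spectral_eigvec cdotZr spectral_eigvec_unit mulr1.
Qed.

Lemma singular_value_spectral s : herm X -> psd X ->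
  singular_value X s <-> exists i, s = d 0 i.
Proof.
move=> hX pX.
have XX : adjmx X *m X = adjmx P *m diag_mx (\row_j (d 0 j ^+ 2)) *m adjmx (adjmx P).
  rewrite hX adjmxK {1 2}X_spectral -!mulmxA [P *m (adjmx P *m _)]mulmxA PP mul1mx.
  rewrite [diag_mx d *m (_ *m P)]mulmxA mulmx_diag.
  by congr (_ *m (diag_mx _ *m _)); apply/matrixP=> i j; rewrite !mxE.
rewrite /singular_value XX eigenvalue_unitary_conj ?adjmxK //.
rewrite eigenvalue_trig ?diag_mx_is_trig //; split => [[s0 /existsP[i]]|[i ->]].
  by rewrite !mxE eqxx mulr1n eqrXn2 ?psd_spectral_ge0 // => /eqP di; exists i.
split; first exact: psd_spectral_ge0.
by apply/existsP; exists i; rewrite !mxE eqxx mulr1n.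
Qed.

Lemma vnorm_spectral_shift_le c r x : 0 <= r -> (forall i, `|d 0 i - c| <= r) ->
  vnorm ((X - c%:M) *m x) <= r * vnorm x.
Proof.
move=> r0 d_le.
have -> : X - c%:M = adjmx P *m diag_mx (\row_j (d 0 j - c)) *m P.
  have -> : diag_mx (\row_j (d 0 j - c)) = diag_mx d - c%:M.
    apply/matrixP=> i j; rewrite !mxE.
    by have [->|] := eqVneq i j; rewrite ?mulr1n ?mulr0n ?subr0.
  by rewrite mulmxBr mulmxBl mul_mx_scalar -scalemxAl PP' scalemx1 X_spectral.
rewrite -!mulmxA vnorm_unitary ?adjmxK // -(vnorm_unitary x PP').
by apply: vnorm_diag_le => // i; rewrite mxE.
Qed.

End Spectral.

Lemma vnorm_adjmx_le (C : numClosedFieldType) m n (B : 'M[C]_(m, n)) s :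
  0 <= s -> (forall x, vnorm (B *m x) <= s * vnorm x) ->
  forall v, vnorm (adjmx B *m v) <= s * vnorm v.
Proof.
move=> s0 B_le v; set w := adjmx B *m v.
have w_sqr : vnorm w * vnorm w <= s * vnorm v * vnorm w.
  rewrite -expr2 vnorm_sqr -[cdot w w]ger0_norm ?cdot_ge0 // {1}/w cdot_mulmxl adjmxK.
  apply: le_trans (cdot_cauchy_schwarz _ _) _.
  by rewrite [in leRHS]mulrAC [in leRHS]mulrC ler_wpM2l ?vnorm_ge0.
have [w0|w_neq0] := eqVneq (vnorm w) 0; first by rewrite w0 mulr_ge0 ?vnorm_ge0.
by rewrite -(ler_pM2r (_ : 0 < vnorm w)) // lt_def w_neq0 vnorm_ge0.
Qed.

Lemma num_abscissa_ge (C : numClosedFieldType) n (A : 'M[C]_n) w x :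
  is_num_abscissa A w -> cdot x x = 1 -> 'Re (cdot x (A *m x)) <= w.
Proof. by move=> [w_ge _] /vnorm_eq1 /w_ge; rewrite -mulmxA. Qed.

Lemma num_abscissa_attained (C : numClosedFieldType) n (A : 'M[C]_n) w :
  is_num_abscissa A w -> exists2 x, cdot x x = 1 & w = 'Re (cdot x (A *m x)).
Proof. by move=> [_ [x /vnorm_eq1 x1 <-]]; exists x; rewrite // -mulmxA. Qed.

Section LyapunovForm.
Variables (C : numClosedFieldType) (n : nat) (A X Q : 'M[C]_n).
Hypotheses (hX : herm X) (lyapX : A *m X + X *m adjmx A = - Q).

Lemma lyap_Re_form x : 'Re (cdot x (A *m (X *m x))) = - cdot x (Q *m x) / 2%:R.
Proof.
rewrite ReE; congr (_ / _); rewrite -cdotNr -mulNmx -lyapX mulmxDl cdotDr -!mulmxA.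
by rewrite [in RHS](cdot_herm _ _ hX) -cdot_mulmxl conj_cdot.
Qed.

Lemma lyap_Re_eigvec v s : X *m v = s *: v -> 0 < s ->
  'Re (cdot v (A *m v)) = - (cdot v (Q *m v) / (2%:R * s)).
Proof.
move=> Xv s_gt0; have s_real : s \is Num.real by rewrite gtr0_real.
apply: (mulfI (lt0r_neq0 s_gt0)); rewrite -ReMl // -cdotZr scalemxAr -Xv.
by rewrite lyap_Re_form; field; rewrite lt0r_neq0.
Qed.

(* With [X x = c x + f]: [c Re (x^* A x) + Re (x^* A f) = Re (x^* A X x) <= 0]. *)
Lemma lyap_Re_upper c r normA x : psd Q -> 0 < c -> 0 <= r ->
  (forall y, vnorm ((X - c%:M) *m y) <= r * vnorm y) ->
  (forall y, vnorm (A *m y) <= normA * vnorm y) ->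
  cdot x x = 1 -> 'Re (cdot x (A *m x)) <= r / c * normA.
Proof.
move=> pQ c_gt0 r0 X_near A_le x1.
set f := (X - c%:M) *m x.
have c_real : c \is Num.real by rewrite gtr0_real.
have Xx : X *m x = c *: x + f by rewrite /f mulmxBl mul_scalar_mx addrC subrK.
have form_le0 : c * 'Re (cdot x (A *m x)) + 'Re (cdot x (A *m f)) <= 0.
  rewrite -ReMl // -raddfD /= -cdotZr scalemxAr -cdotDr -mulmxDr -Xx.
  by rewrite lyap_Re_form mulNr oppr_le0 divr_ge0 ?pQ ?ler0n.
have x_norm : vnorm x = 1 by apply/vnorm_eq1.
have normA0 : 0 <= normA.
  by have := A_le x; rewrite x_norm mulr1; apply: le_trans; apply: vnorm_ge0.
have Af_le : `|cdot x (A *m f)| <= normA * r.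
  apply: le_trans (cdot_cauchy_schwarz _ _) _; rewrite x_norm mul1r.
  apply: le_trans (A_le f) _; rewrite ler_wpM2l //.
  by have := X_near x; rewrite x_norm mulr1.
rewrite mulrAC ler_pdivlMr // mulrC.
apply: le_trans (_ : - 'Re (cdot x (A *m f)) <= _); first by rewrite -subr_le0 opprK.
rewrite mulrC -raddfN /=; apply: le_trans (leif_Re_Creal _).1 _.
by rewrite normrN.
Qed.

End LyapunovForm.

Lemma num_abscissa_ge_eigvec (C : numClosedFieldType) n r (A X : 'M[C]_n) (B : 'M[C]_(n, r))
    v s normB w :
  herm X -> A *m X + X *m adjmx A = - (B *m adjmx B) ->
  X *m v = s *: v -> 0 < s -> cdot v v = 1 ->
  is_opnorm B normB -> is_num_abscissa A w -> - (normB ^+ 2 / (2%:R * s)) <= w.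
Proof.
move=> hX lyapX Xv s_gt0 v1 [normB0 [B_le _]] abscissa.
apply: le_trans (num_abscissa_ge abscissa v1); rewrite (lyap_Re_eigvec hX lyapX Xv s_gt0).
rewrite lerN2 ler_pM2r ?invr_gt0 ?mulr_gt0 //.
rewrite -mulmxA -{1}(adjmxK B) -cdot_mulmxl -vnorm_sqr lerXn2r ?nnegrE ?vnorm_ge0 //.
by rewrite -[normB]mulr1 -(vnorm_eq1 v).2 // vnorm_adjmx_le.
Qed.

Lemma num_abscissa_le_spectral (C : numClosedFieldType) n (A X Q P : 'M[C]_n) (d : 'rV[C]_n)
    smin smax normA w :
  adjmx P *m P = 1%:M -> P *m adjmx P = 1%:M -> X = adjmx P *m diag_mx d *m P ->
  herm X -> psd Q -> A *m X + X *m adjmx A = - Q ->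
  (forall i, smin <= d 0 i <= smax) -> 0 < smin -> smin <= smax ->
  is_opnorm A normA -> is_num_abscissa A w -> w <= (smax - smin) / (smax + smin) * normA.
Proof.
move=> PP' PP X_spectral hX pQ lyapX d_bounds smin_gt0 smin_le [_ [A_le _]] abscissa.
have [x x1 ->] := num_abscissa_attained abscissa.
have two_neq0 : 2%:R != 0 :> C by rewrite pnatr_eq0.
set c := (smax + smin) / 2%:R; set r := (smax - smin) / 2%:R.
have smax_gt0 := lt_le_trans smin_gt0 smin_le.
have c_gt0 : 0 < c by rewrite divr_gt0 ?ltr0n ?addr_gt0.
have r_ge0 : 0 <= r by rewrite divr_ge0 ?ler0n ?subr_ge0.
have d_near i : `|d 0 i - c| <= r.
  have /andP[smin_d d_smax] := d_bounds i.
  have d_real : d 0 i - c \is Num.real.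
    by rewrite rpredB ?gtr0_real // (lt_le_trans smin_gt0 smin_d).
  rewrite real_ler_norml // -(subr_ge0 (- r)) -(subr_ge0 _ r).
  have -> : d 0 i - c - - r = d 0 i - smin by rewrite /c /r; field.
  have -> : r - (d 0 i - c) = smax - d 0 i by rewrite /c /r; field.
  by rewrite !subr_ge0 smin_d d_smax.
have -> : (smax - smin) / (smax + smin) = r / c.
  by rewrite /c /r; field; rewrite lt0r_neq0 ?addr_gt0.
apply: (lyap_Re_upper hX lyapX pQ c_gt0 r_ge0 _ A_le x1).
by move=> y; apply: (vnorm_spectral_shift_le PP' PP X_spectral y r_ge0 d_near).
Qed.

Unset Implicit Arguments.
Theorem corollary5p2 (C : numClosedFieldType) (n r : nat)
    (A : 'M[C]_n) (B : 'M[C]_(n, r)) (X : 'M[C]_n)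
    (s1 sn normA normB w : C) :
  stable A ->
  controllable A B ->
  A *m X + X *m adjmx A = - (B *m adjmx B) ->
  (* s1 is the largest and sn the smallest singular value of X, sn > 0 *)
  singular_value X s1 -> singular_value X sn ->
  (forall s, singular_value X s -> sn <= s /\ s <= s1) ->
  0 < sn ->
  is_opnorm A normA -> is_opnorm B normB ->
  is_num_abscissa A w ->
  - (normB ^+ 2 / (2 * s1)) <= w /\ w <= (s1 - sn) / (s1 + sn) * normA.
Proof.
(* Controllability only serves to make [X] definite, which [0 < sn] already gives. *)
move=> A_stable _ lyapX sv1 _ sv_bounds sn_gt0 opA opB abscissa.
have hX := lyap_stable_herm A_stable (herm_gram B) lyapX.
have pX := lyap_stable_psd A_stable hX (herm_gram B) (psd_gram B) lyapX.
have [P [d [PP' PP X_spectral]]] := herm_spectral hX.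
have svE s := singular_value_spectral PP' PP X_spectral s hX pX.
have d_bounds i : sn <= d 0 i <= s1.
  by have [-> ->] := sv_bounds _ ((svE _).2 (ex_intro _ i erefl)).
have sn_le_s1 : sn <= s1 by case: (sv_bounds _ sv1).
have [j s1E] := (svE s1).1 sv1.
have Xv := spectral_eigvec PP X_spectral j; rewrite -s1E in Xv.
split.
  exact: num_abscissa_ge_eigvec hX lyapX Xv (lt_le_trans sn_gt0 sn_le_s1)
    (spectral_eigvec_unit PP j) opB abscissa.
exact: num_abscissa_le_spectral PP' PP X_spectral hX (psd_gram B) lyapX d_bounds
  sn_gt0 sn_le_s1 opA abscissa.
Qed.
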